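(* Let $m,d,\ell\ge1$, $n\ge2$ a power of two, $N\ge2$, $t>0$, and let $f\colon[N]^m\to\{0,1\}^{\ell\log n+(\ell+1)n}$ be $d$-local. Let $S\subseteq[m]$ be the set of input coordinates that either affect more than $t$ output bits of $f$ or affect at least one of the first $\ell\log n$ output bits. Then the fraction of shift vectors $i\in(\{0,1\}^{\log n})^\ell$ that are bad (with respect to $f$, $S$) is at most $4d\big(\frac{t}{\ell n}\big)^{\ell}$.
   Context: A function is $d$-local if each output bit depends on at most $d$ input coordinates; an input coordinate ''affects'' an output bit if that bit depends on it. The $\ell\log n+(\ell+1)n$ output bits of $f$ are named, in order, $\mathbf{i}^{(1)},\dots,\mathbf{i}^{(\ell)}$ (each a block of $\log n$ bits), then $\mathbf{x}=(\mathbf{x}_1,\dots,\mathbf{x}_n)$, then $\mathbf{y}^{(1)},\dots,\mathbf{y}^{(\ell)}$ (each in $\{0,1\}^n$). Elements $i^{(j)}\in\{0,1\}^{\log n}$ are identified with elements of $\mathbb{Z}_n$, and indices of $\mathbf{x},\mathbf{y}^{(j)}$ are taken modulo $n$. For a shift vector $i=(i^{(1)},\dots,i^{(\ell)})\in(\{0,1\}^{\log n})^\ell$ and $u\in[n]$, the equality block $B_u(i)$ is the set of $\ell+1$ output positions $(\mathbf{x}_u,\mathbf{y}^{(1)}_{u-i^{(1)}},\dots,\mathbf{y}^{(\ell)}_{u-i^{(\ell)}})$. A block is covered if some input coordinate $c\notin S$ affects every output bit in the block. A shift vector $i$ is bad if at least $n/4$ of the blocks $B_u(i)$, $u\in[n]$,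 are covered. *)

From mathcomp Require Import all_boot all_order all_algebra.
Set Implicit Arguments. Unset Strict Implicit. Unset Printing Implicit Defensive.

Definition affects (m N L : nat) (f : {ffun 'I_m -> 'I_N} -> 'I_L -> bool)
  (c : 'I_m) (j : 'I_L) : bool :=
  [exists x : {ffun 'I_m -> 'I_N}, exists y : {ffun 'I_m -> 'I_N},
     [forall c' : 'I_m, (c' != c) ==> (x c' == y c')] && (f x j != f y j)].

Definition affects_pos (m N L : nat) (f : {ffun 'I_m -> 'I_N} -> 'I_L -> bool)
  (c : 'I_m) (p : nat) : bool :=
  [exists j : 'I_L, (nat_of_ord j == p) && affects f c j].

Definition local (m N L d : nat) (f : {ffun 'I_m -> 'I_N} -> 'I_L -> bool) : Prop :=
  forall j : 'I_L, #|[set c : 'I_m | affects f c j]| <= d.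

(* Output length for parameters l (= ell), k (= log n), n. *)
Definition outlen (l k n : nat) : nat := l * k + (l.+1) * n.

(* 0-based positions: i-blocks occupy [0, l*k); x_u is at l*k + u;
   y^(j)_v (j = 0..l-1 standing for y^(1)..y^(l)) is at l*k + n + j*n + v. *)
Definition pos_x (l k n u : nat) : nat := l * k + u.
Definition pos_y (l k n j v : nat) : nat := l * k + n + j * n + v.

Definition Sset (R : realFieldType) (m N L lk : nat)
  (f : {ffun 'I_m -> 'I_N} -> 'I_L -> bool) (t : R) : {set 'I_m} :=
  [set c : 'I_m | (t < (#|[set j : 'I_L | affects f c j]|)%:R)%R
                  || [exists j : 'I_L, (j < lk) && affects f c j]].

(* Block B_u(i) is covered w.r.t. S. Shift values i^(j) are in Z_n = 'I_n;
   index u - i^(j) is taken mod n. *)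
Definition covered (m N l k n : nat)
  (f : {ffun 'I_m -> 'I_N} -> 'I_(outlen l k n) -> bool) (S : {set 'I_m})
  (i : {ffun 'I_l -> 'I_n}) (u : 'I_n) : bool :=
  [exists c : 'I_m, (c \notin S) && affects_pos f c (pos_x l k n u)
     && [forall j : 'I_l, affects_pos f c (pos_y l k n j ((u + n - i j) %% n))]].

Definition bad (R : realFieldType) (m N l k n : nat)
  (f : {ffun 'I_m -> 'I_N} -> 'I_(outlen l k n) -> bool) (S : {set 'I_m})
  (i : {ffun 'I_l -> 'I_n}) : bool :=
  ((n%:R / 4 : R) <= (#|[set u : 'I_n | covered f S i u]|)%:R)%R.

From mathcomp Require Import all_boot all_order all_algebra zify ring.
Import Order.TTheory GRing.Theory Num.Theory.
Set Implicit Arguments.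
Unset Strict Implicit.
Unset Printing Implicit Defensive.

(* A block B_u(i) can only be covered by an input c
   outside S affecting x_u, and by locality there are at most d such c.  For
   one such c, the shifts i for which c affects every y^(j)_(u - i^(j)) form a
   product of sets of sizes a_j, where a_j is the number of bits of y^(j)
   affected by c; as sum_j a_j <= t, AM-GM bounds the product by (t/l)^l.  So
   each u is covered for at most d (t/l)^l shifts, and counting the pairs
   (i, u) with B_u(i) covered shows that at most 4 d (t/l)^l shifts have n/4
   covered blocks. *)

Lemma card_ffun_forall (I T : finType) (P : I -> T -> bool) :
  #|[set g : {ffun I -> T} | [forall i, P i (g i)]]| = \prod_i #|[set x | P i x]|.
Proof.
rewrite (eq_card (B := family (fun i => [set x | P i x]))).
  by rewrite card_family foldrE big_image.
by move=> g; rewrite inE; apply/forallP/familyP => Pg i; have := Pg i; rewrite ?inE.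
Qed.

Lemma leq_card_set_inj (T U : finType) (P : pred T) (Q : pred U) (g : T -> U) :
  injective g -> (forall x, P x -> Q (g x)) ->
  #|[set x | P x]| <= #|[set y | Q y]|.
Proof.
move=> g_inj PQ; rewrite -(card_imset [set x | P x] g_inj); apply: subset_leq_card.
by apply/subsetP => y /imsetP[x]; rewrite !inE => Px ->; apply: PQ.
Qed.

Lemma card_bigcup_le (I T : finType) (A : {pred I}) (F : I -> {set T}) :
  #|\bigcup_(c in A) F c| <= \sum_(c in A) #|F c|.
Proof.
elim/big_rec2: _ => [|c x U _ leUx]; first by rewrite cards0.
by rewrite (leq_trans (leq_card_setU (F c) U).1) ?leq_add2l.
Qed.

Lemma card_set_sum (T : finType) (P : pred T) : #|[set x | P x]| = \sum_x P x.
Proof.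
by rewrite -sum1_card big_mkcond; apply: eq_bigr => x _; rewrite inE; case: (P x).
Qed.

Lemma sum_card_exchange (T U : finType) (P : T -> U -> bool) :
  \sum_x #|[set y | P x y]| = \sum_y #|[set x | P x y]|.
Proof.
under eq_bigr do rewrite card_set_sum.
by rewrite exchange_big; apply: eq_bigr => y _; rewrite card_set_sum.
Qed.

Lemma sub_modn_inj (n u : nat) : u < n ->
  injective (fun v : 'I_n => (u + n - v) %% n).
Proof.
move=> ltun v w eq_vw; apply/ord_inj/eqP.
have le_n (x : 'I_n) : x <= u + n by rewrite ltnW // ltn_addl.
rewrite -(modn_small (ltn_ord v)) -(modn_small (ltn_ord w)).
rewrite -(eqn_modDl (u + n - v)) -[in X in _ == X]modnDml eq_vw modnDml.
by rewrite !subnK.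
Qed.

Lemma card_sub_modn_le (n u : nat) (Q : pred nat) : u < n ->
  #|[set v : 'I_n | Q ((u + n - v) %% n)]| <= #|[set w : 'I_n | Q w]|.
Proof.
move=> ltun; have n_gt0 : 0 < n by apply: leq_ltn_trans ltun.
pose g (v : 'I_n) : 'I_n := Ordinal (ltn_pmod (u + n - v) n_gt0).
apply: (@leq_card_set_inj _ _ _ _ g) => // v w /(congr1 val).
exact: sub_modn_inj.
Qed.

Lemma affects_posE (m N L : nat) (f : {ffun 'I_m -> 'I_N} -> 'I_L -> bool)
    (c : 'I_m) (j : 'I_L) :
  affects_pos f c j = affects f c j.
Proof.
apply/existsP/idP => [[j' /andP[/eqP/ord_inj-> //]] | affj].
by exists j; rewrite eqxx.
Qed.

Section OutputPositions.

Variables (m N l k n : nat).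
Variable f : {ffun 'I_m -> 'I_N} -> 'I_(outlen l k n) -> bool.

Lemma pos_x_lt (u : 'I_n) : pos_x l k n u < outlen l k n.
Proof. by rewrite /pos_x /outlen mulSn; have := ltn_ord u; lia. Qed.

Lemma pos_y_lt (j : 'I_l) (v : 'I_n) : pos_y l k n j v < outlen l k n.
Proof.
have : j.+1 * n <= l * n by rewrite leq_mul2r ltn_ord orbT.
by rewrite /pos_y /outlen !mulSn; have := ltn_ord v; lia.
Qed.

Lemma pos_y_inj : injective (fun p : 'I_l * 'I_n => pos_y l k n p.1 p.2).
Proof.
move=> [j v] [j' v'] /=; rewrite /pos_y => eq_pos.
have eq_jv : j * n + v = j' * n + v' by lia.
have n_gt0 : 0 < n by apply: leq_ltn_trans (ltn_ord v).
have [div_jv mod_jv] := (congr1 (divn^~ n) eq_jv, congr1 (modn^~ n) eq_jv).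
rewrite /= !divnMDl ?divn_small // !addn0 in div_jv.
rewrite /= !modnMDl !modn_small // in mod_jv.
by rewrite (ord_inj div_jv) (ord_inj mod_jv).
Qed.

Lemma sum_affects_y_le (c : 'I_m) :
  \sum_(j < l) #|[set v : 'I_n | affects_pos f c (pos_y l k n j v)]|
    <= #|[set p | affects f c p]|.
Proof.
pose pos_y_ord (p : 'I_l * 'I_n) := Ordinal (pos_y_lt p.1 p.2).
have pos_y_ord_inj : injective pos_y_ord.
  by move=> p q /(congr1 val); apply: pos_y_inj.
rewrite (eq_bigr (fun j : 'I_l => \sum_(v : 'I_n) affects_pos f c (pos_y l k n j v)))
  => [|j _].
  rewrite pair_bigA /= -card_set_sum.
  apply: (@leq_card_set_inj _ _ _ (affects f c) _ pos_y_ord_inj) => p.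
  by rewrite -[pos_y _ _ _ _ _]/(nat_of_ord (pos_y_ord p)) affects_posE.
by rewrite card_set_sum.
Qed.

End OutputPositions.

Local Open Scope ring_scope.

Lemma natr_prod_le_AGM (R : realFieldType) (I : finType) (a : I -> nat) (t : R) :
  (\sum_i a i)%:R <= t -> (\prod_i a i)%:R <= (t / #|I|%:R) ^+ #|I|.
Proof.
move=> le_sum_t; rewrite natr_prod.
have AGM := leif_AGM (A := predT) (E := fun i => (a i)%:R : R) (fun i _ => ler0n _ _).
apply: le_trans AGM.1 _; rewrite -natr_sum.
have ge0 (x : R) : 0 <= x -> 0 <= x / #|I|%:R by move=> ?; rewrite divr_ge0.
have t_ge0 : 0 <= t by apply: le_trans le_sum_t.
by rewrite lerXn2r ?nnegrE ?ge0 // ler_wpM2r ?invr_ge0.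
Qed.

Section CoveredBlocks.

Variables (m N l k n d : nat) (R : realFieldType) (t : R) (S : {set 'I_m}).
Variable f : {ffun 'I_m -> 'I_N} -> 'I_(outlen l k n) -> bool.
Hypothesis f_local : local d f.
Hypothesis t_ge0 : 0 <= t.
Hypothesis affects_le_t : forall c, c \notin S -> #|[set p | affects f c p]|%:R <= t.

Lemma card_shifts_covered_by_le (c : 'I_m) (u : 'I_n) :
  #|[set p | affects f c p]|%:R <= t ->
  #|[set i : {ffun 'I_l -> 'I_n} |
      [forall j : 'I_l, affects_pos f c (pos_y l k n j ((u + n - i j) %% n))]]|%:R
    <= (t / l%:R) ^+ l.
Proof.
move=> le_t.
rewrite (card_ffun_forall
  (fun (j : 'I_l) (v : 'I_n) => affects_pos f c (pos_y l k n j ((u + n - v) %% n)))).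
pose a (j : 'I_l) := #|[set v : 'I_n | affects_pos f c (pos_y l k n j v)]|.
apply: le_trans (_ : (\prod_j a j)%:R <= _).
  rewrite ler_nat; apply: leq_prod => j _.
  exact: (card_sub_modn_le (fun w => affects_pos f c (pos_y l k n j w)) (ltn_ord u)).
rewrite -[in X in _ <= X](card_ord l); apply: natr_prod_le_AGM.
by apply: le_trans le_t; rewrite ler_nat sum_affects_y_le.
Qed.

Lemma card_covered_le (u : 'I_n) :
  #|[set i | covered f S i u]|%:R <= d%:R * (t / l%:R) ^+ l.
Proof.
pose x_u := Ordinal (pos_x_lt l k u).
pose A := [set c | (c \notin S) && affects f c x_u].
pose F c := [set i : {ffun 'I_l -> 'I_n} |
  [forall j : 'I_l, affects_pos f c (pos_y l k n j ((u + n - i j) %% n))]].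
have covered_sub : [set i | covered f S i u] \subset \bigcup_(c in A) F c.
  apply/subsetP => i; rewrite inE => /existsP[c /andP[/andP[cS cx] cy]].
  apply/bigcupP; exists c; last by rewrite inE.
  by rewrite inE cS -(affects_posE f c x_u).
have card_A : (#|A| <= d)%N.
  apply: leq_trans (f_local x_u); apply/subset_leq_card/subsetP => c.
  by rewrite !inE => /andP[].
apply: le_trans (_ : (\sum_(c in A) #|F c|)%:R <= _).
  by rewrite ler_nat (leq_trans (subset_leq_card covered_sub)) ?card_bigcup_le.
rewrite natr_sum; apply: le_trans (_ : \sum_(c in A) (t / l%:R) ^+ l <= _).
  apply: ler_sum => c; rewrite inE => /andP[cS _].
  exact/card_shifts_covered_by_le/affects_le_t.
rewrite sumr_const -[_ *+ #|A|]mulr_natl; apply: ler_wpM2r; last by rewrite ler_nat.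
by rewrite exprn_ge0 ?divr_ge0.
Qed.

Lemma card_bad_le : (0 < n)%N ->
  #|[set i | bad R f S i]|%:R <= 4 * (d%:R * (t / l%:R) ^+ l).
Proof.
move=> n_gt0; set K := d%:R * (t / l%:R) ^+ l.
pose cov i := #|[set u | covered f S i u]|%:R : R.
have sum_cov : \sum_i cov i <= n%:R * K.
  rewrite -natr_sum sum_card_exchange natr_sum.
  apply: le_trans (ler_sum _ (fun u _ => card_covered_le u)) _.
  by rewrite sumr_const card_ord -[_ *+ n]mulr_natl.
have bad_cov i : bad R f S i -> n%:R <= cov i * 4.
  by rewrite /bad ler_pdivrMr.
have bad_sum : #|[set i | bad R f S i]|%:R * n%:R <= (\sum_i cov i) * 4.
  rewrite mulr_natl -sumr_const mulr_suml big_mkcond /=.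
  apply: ler_sum => i _; rewrite inE.
  by case: ifP => [/bad_cov // | _]; rewrite mulr_ge0.
have n_pos : 0 < n%:R :> R by rewrite ltr0n.
rewrite -(ler_pM2r n_pos); apply: le_trans bad_sum _.
have -> : 4 * K * n%:R = n%:R * K * 4 by ring.
by apply: ler_wpM2r.
Qed.

End CoveredBlocks.

Theorem claim4 (R : realFieldType) (m d l k n N : nat) (t : R)
  (hm : (1 <= m)%N) (hd : (1 <= d)%N) (hl : (1 <= l)%N)
  (hn : n = (2 ^ k)%N) (hn2 : (2 <= n)%N) (hN : (2 <= N)%N) (ht : 0 < t)
  (f : {ffun 'I_m -> 'I_N} -> 'I_(outlen l k n) -> bool)
  (hloc : local d f) :
  let S := Sset (l * k) f t in
  (#|[set i : {ffun 'I_l -> 'I_n} | bad R f S i]|)%:R / (n ^ l)%:R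
    <= 4 * d%:R * (t / (l * n)%:R) ^+ l.
Proof.
cbv zeta; set S := Sset (l * k) f t.
have affects_le_t c : c \notin S -> #|[set p | affects f c p]|%:R <= t.
  by rewrite inE negb_or -leNgt => /andP[].
have -> : (t / (l * n)%:R) ^+ l = (t / l%:R) ^+ l / (n ^ l)%:R.
  by rewrite natrM natrX invfM mulrA exprMn exprVn.
rewrite !mulrA -(mulrA 4); apply: ler_wpM2r; first by rewrite invr_ge0.
exact: card_bad_le hloc (ltW ht) affects_le_t (ltnW hn2).
Qed.
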